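(* Let $(u,x)$ be an enhanced state of an oriented link diagram $D$ with $q(u,x)=j_{\max}(D)-2$. Then $\Phi(u)\le 1$. Moreover, if $\Phi(u)=0$ then $x=x_z^+$ for some $z\in Z(u)$, and if $\Phi(u)=1$ then $x=x_+$.
   Context: $D$ is an oriented link diagram with ordered crossings $c_1,\dots,c_n$, $n_+$ positive and $n_-$ negative. A state is $u\in\{0,1\}^n$, $|u|=\sum u_i$, $\vec1=(1,\dots,1)$; $u\succ_i v$ means $u_i=1,v_i=0$, $u_j=v_j$ otherwise. $D(u)$ is obtained by smoothing each $c_i$ by its Kauffman $u_i$-smoothing; $Z(u)$ is its set of circles; going from $u$ to $v$ with $u\succ_i v$ is surgery along the chord of $c_i$, a merging if that chord joins two different circles. $\Phi(u)$ is the number of mergings in any chain $\vec1=u_0\succ u_1\succ\cdots\succ u_k=u$. An enhancement is a map $x\colon Z(u)\to\{\pm1\}$, $Z_\pm(u,x)$ the circles labelled $\pm1$; $q(u,x)=n_+-2n_-+|u|+|Z_+(u,x)|-|Z_-(u,x)|$; $j_{\max}(D)=\max q(u,x)$. $x_+$ is the constant enhancement $+1$, and for $z\in Z(u)$, $x_z^+$ assigns $-1$ to $z$ and $+1$ to every other circle. *)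

From HB Require Import structures.
From mathcomp Require Import all_boot all_order all_algebra.
Set Implicit Arguments. Unset Strict Implicit. Unset Printing Implicit Defensive.
Import Order.TTheory GRing.Theory Num.Theory.

(* An oriented link diagram with [ncr] crossings c_0,...,c_(ncr-1), plus
   [nfree] crossingless (unknotted, unlinked-in-the-diagram) circle components.
   At crossing i the four half-edges ("darts") are (i,0),(i,1),(i,2),(i,3),
   listed COUNTERCLOCKWISE, where (i,0) is the INCOMING end of the under-strand
   (so (i,2) is its outgoing end) and (i,1),(i,3) are the two ends of the
   over-strand.  [posc i] = true iff the over-strand runs from (i,3) to (i,1)
   (this is exactly the case of a positive crossing).  [edge] pairs the darts
   joined by an edge of the underlying 4-valent plane graph. *)
Record diagram := Diagram {
  ncr : nat;
  nfree : nat;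
  edge : 'I_ncr * 'I_4 -> 'I_ncr * 'I_4;
  posc : 'I_ncr -> bool }.

Notation dart D := ((ordinal (ncr D)) * (ordinal 4))%type.

Arguments edge : clear implicits.
Arguments posc : clear implicits.

Section Diagram.
Variable D : diagram.
Local Notation n := (ncr D).

Definition rot (d : dart D) : dart D := (d.1, inord ((d.2).+1 %% 4)).

Definition incoming (d : dart D) : bool :=
  (val d.2 == 0) || (val d.2 == (if posc D d.1 then 3 else 1)).

Definition graph_rel : rel (dart D) :=
  fun a b => [|| b == edge D a, b == rot a | a == rot b].

(* Well-formedness: [edge] is a fixed-point-free involution compatible with the
   orientation (each edge goes from an outgoing dart to an incoming one), and the
   combinatorial map (rot, edge) is planar: by Euler's formula every connected
   component has V - E + F = 2, i.e. #faces = n + 2 * #components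
   (V = n, E = 2n), where faces are the orbits of rot \o edge. *)
Definition is_diagram : Prop :=
  [/\ forall d, edge D (edge D d) = d,
      forall d, incoming (edge D d) = ~~ incoming d &
      fcard (fun d => rot (edge D d)) predT = n + 2 * n_comp graph_rel predT].

Definition npos : nat := #|[set i | posc D i]|.
Definition nneg : nat := #|[set i | ~~ posc D i]|.

Definition state := {ffun 'I_n -> bool}.
Definition ones : state := [ffun => true].
Definition weight (u : state) : nat := #|[set i | u i]|.

(* Kauffman smoothing at crossing i: the 0-smoothing (A-smoothing, joining the
   A-regions) connects dart 0 with 1 and 2 with 3; the 1-smoothing (B-smoothing)
   connects 0 with 3 and 1 with 2. *)
Definition smooth (u : state) (d : dart D) : dart D :=
  (d.1, if u d.1 then inord (3 - d.2) else inord (if odd d.2 then d.2.-1 else d.2.+1)).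

Definition circ_rel (u : state) : rel (dart D) :=
  fun a b => (b == edge D a) || (b == smooth u a).

(* Z(u): circles of D(u): those passing through crossings (represented by the
   root dart of their component), plus the crossingless circles. *)
Definition Z (u : state) : finType :=
  ({d : dart D | fingraph.root (circ_rel u) d == d} + 'I_(nfree D))%type.

(* Enhancements: x c = true means label +1, false means label -1. *)
Definition enh (u : state) := {ffun Z u -> bool}.
Definition xplus (u : state) : enh u := [ffun => true].
Definition xzplus (u : state) (z : Z u) : enh u := [ffun c => c != z].

Definition Zplus (u : state) (x : enh u) : nat := #|[set c | x c]|.
Definition Zminus (u : state) (x : enh u) : nat := #|[set c | ~~ x c]|.

Definition qdeg (u : state) (x : enh u) : int :=
  (npos%:Z - 2 * (nneg%:Z) + (weight u)%:Z + (Zplus x)%:Z - (Zminus x)%:Z)%R.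

Definition jmax : int :=
  \big[Num.max/qdeg (xplus ones)]_(u : state)
     \big[Num.max/qdeg (xplus ones)]_(x : enh u) qdeg x.

(* Surgery along the chord of c_i in D(v) (with v_i = 1) is a merging iff the
   two arcs of the 1-smoothing at c_i (through darts 0 and 1 respectively) lie
   on different circles of D(v). *)
Definition merging (v : state) (i : 'I_n) : bool :=
  ~~ connect (circ_rel v) (i, inord 0) (i, inord 1).

(* Phi(u): number of mergings in the chain 1 = w_0 >= w_1 >= ... >= w_n = u,
   where w_k agrees with u on coordinates < k and is 1 elsewhere (steps with
   w_k = w_(k+1) are skipped); this is one particular chain from 1 to u. *)
Definition chain_state (u : state) (k : nat) : state :=
  [ffun j : 'I_n => if (j < k)%N then u j else true].

Definition Phi (u : state) : nat :=
  \sum_(k < n) ((~~ u k) && merging (chain_state u k) k).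

End Diagram.

From mathcomp Require Import all_boot all_order all_algebra all_fingroup zify.
From Pilot Require Import Defs.
Set Implicit Arguments. Unset Strict Implicit. Unset Printing Implicit Defensive.
Import Order.TTheory GRing.Theory Num.Theory.

(* The smoothed diagram D(u) is a combinatorial map on the half-edges at the
   crossings, with the edge involution and the smoothing involution; its
   components are the circles of D(u) and each circle bounds exactly two faces.
   Comparing D(w) and D(w'), where w' turns the 1-smoothing at c_i of w into
   the 0-smoothing, with the map in which c_i is left as a 4-valent vertex,
   each differs from it by one transposition, so the face counts move by 1.
   Hence the number of circles changes by -1 (a merging), +1, or 0; the last
   case would give the map with c_i restored positive genus, whereas smoothing
   the crossings of a planar diagram one at a time never creates genus.
   Along the chain from 1 to u this makes |u| + |Z(u)| + 2 Phi(u) constant,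
   so q(u,x) = j_max(D) - 2 (Phi(u) + |Z_-(u,x)|), and q(u,x) = j_max(D) - 2
   means Phi(u) + |Z_-(u,x)| = 1. *)

Section Components.
Variable T : finType.
Implicit Types e : rel T.

Lemma n_compT e : n_comp e T = #|roots e|.
Proof. by apply: eq_card => x; rewrite !inE andbT. Qed.

Lemma n_comp_sub e1 e2 : connect_sym e1 -> connect_sym e2 ->
  subrel (connect e1) (connect e2) -> n_comp e2 T <= n_comp e1 T.
Proof.
move=> sym1 sym2 sub12; rewrite !n_compT.
apply: (leq_trans _ (leq_image_card (fingraph.root e2) _)).
apply/subset_leq_card/subsetP => r; rewrite inE => /eqP r2.
have -> : r = fingraph.root e2 (fingraph.root e1 r).
  by rewrite -{1}r2; apply/(fingraph.rootP sym2)/sub12/connect_root.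
by apply: map_f; rewrite mem_enum; apply: roots_root.
Qed.

Definition pair_rel (a b : T) : rel T :=
  fun x y => ((x == a) && (y == b)) || ((x == b) && (y == a)).

Lemma pair_rel_sym a b : symmetric (pair_rel a b).
Proof. by move=> x y; rewrite /pair_rel orbC (andbC (y == a)) (andbC (y == b)). Qed.

Lemma connect_relU_pair e a b x y : connect (relU e (pair_rel a b)) x y ->
  [\/ connect e x y, connect e x a && connect e b y | connect e x b && connect e a y].
Proof.
case/connectP=> p + ->; elim: p x => [|z p IH] x /=; first by rewrite connect0; constructor.
case/andP=> exz /IH[H|/andP[H1 H2]|/andP[H1 H2]]; case/orP: exz => [exz|].
- by apply: Or31; apply: connect_trans (connect1 exz) H.
- by case/orP=> /andP[/eqP? /eqP?]; subst; [apply: Or32|apply: Or33]; rewrite connect0.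
- by apply: Or32; rewrite H2 (connect_trans (connect1 exz) H1).
- by case/orP=> /andP[/eqP? /eqP?]; subst; [apply: Or32; rewrite connect0|apply: Or31].
- by apply: Or33; rewrite H2 (connect_trans (connect1 exz) H1).
- by case/orP=> /andP[/eqP? /eqP?]; subst; [apply: Or31|apply: Or33; rewrite connect0].
Qed.

Lemma n_comp_relU_pair e a b : connect_sym e ->
  n_comp e T <= (n_comp (relU e (pair_rel a b)) T).+1.
Proof.
move=> syme; set e' := relU e (pair_rel a b); rewrite !n_compT.
have syme' : connect_sym e'.
  by apply: relU_sym => //; apply/sym_connect_sym/pair_rel_sym.
rewrite (cardD1 (fingraph.root e a)) addnC -addn1 leq_add ?leq_b1 //.
set B := [predD1 roots e & fingraph.root e a].
rewrite -(@card_in_image _ _ (fingraph.root e') B).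
  by apply/subset_leq_card/subsetP => r /mapP[x _ ->]; apply: roots_root.
move=> x y; rewrite !inE => /andP[xa /eqP xr] /andP[ya /eqP yr].
move/(fingraph.rootP syme')/connect_relU_pair.
case=> [|/andP[xa' _]|/andP[_ ya']].
- by move/(fingraph.rootP syme); rewrite xr yr.
- by move/(fingraph.rootP syme): xa'; rewrite xr => ax; rewrite ax eqxx in xa.
- by move/(fingraph.rootP syme): ya'; rewrite yr => ay; rewrite ay eqxx in ya.
Qed.

End Components.

Section Orbits.
Variable T : finType.
Implicit Types s : {perm T}.

Lemma fconnect_sym_perm s : connect_sym (frel s).
Proof. exact/fconnect_sym/perm_inj. Qed.

Lemma in_porbit s x y : (y \in porbit s x) = fconnect s x y.
Proof.
apply/porbitP/idP => [[i ->]|H]; first by rewrite permX fconnect_iter.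
by exists (findex s x y); rewrite permX iter_findex.
Qed.

Lemma card_porbits s : #|porbits s| = #|froots s|.
Proof.
have -> : porbits s = porbit s @: [set x | froots s x].
  apply/setP => C; apply/imsetP/imsetP => [[x _ ->]|[x _ ->]]; last by exists x.
  exists (froot s x); first by rewrite inE; apply/roots_root/fconnect_sym_perm.
  apply/setP => y; rewrite !in_porbit.
  exact/same_connect/connect_root/fconnect_sym_perm.
rewrite card_in_imset; first by apply: eq_card => x; rewrite inE.
move=> x y; rewrite !inE => /eqP rx /eqP ry /setP/(_ y).
rewrite !in_porbit connect0 => xy.
by rewrite -rx -ry; apply/(fingraph.rootP (fconnect_sym_perm s)).
Qed.

Lemma porbits_mul_tpermr s x y :
  #|porbits (s * tperm x y)%g| + (x \notin porbit s y).*2 = #|porbits s| + (x != y).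
Proof.
rewrite -porbitsV invMg tpermV -(porbitsV s) -(porbitV s).
exact: porbits_mul_tperm.
Qed.

Lemma porbit_mul_tperm_notin s a b x :
  a \notin porbit s x -> b \notin porbit s x ->
  porbit (s * tperm a b)%g x =i porbit s x.
Proof.
move=> ha hb.
have iterE k : ((s * tperm a b) ^+ k)%g x = (s ^+ k)%g x.
  elim: k => [|k IH]; first by rewrite !expg0.
  rewrite !expgSr !permM IH tpermD //.
    by apply: contraNneq ha => ->; rewrite -permM -expgSr mem_porbit.
  by apply: contraNneq hb => ->; rewrite -permM -expgSr mem_porbit.
by move=> y; apply/porbitP/porbitP => -[k ->]; exists k; rewrite iterE.
Qed.

End Orbits.

Section Maps.
Variable T : finType.
Implicit Types al r : {perm T}.

(* A combinatorial map: [al] pairs darts into edges and [r] rotates them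
   around vertices; the faces are the cycles of [r \o al], which is [al * r]
   in {perm T}. *)
Definition map_rel (al r : T -> T) : rel T :=
  fun x y => [|| y == al x, x == al y, y == r x | x == r y].

Definition map_comps al r := n_comp (map_rel al r) T.
Definition map_faces al r := #|porbits (al * r)%g|.

Lemma map_rel_sym (al r : T -> T) : symmetric (map_rel al r).
Proof. by move=> x y; rewrite /map_rel orbCA orbA [_ || (x == _)]orbC -!orbA orbCA. Qed.

Lemma map_connect_sym (al r : T -> T) : connect_sym (map_rel al r).
Proof. exact/sym_connect_sym/map_rel_sym. Qed.

Lemma connect_map_rel_step al r y : connect (map_rel al r) y (r (al y)).
Proof.
by apply: (connect_trans (y := al y)); apply: connect1; rewrite /map_rel eqxx ?orbT.
Qed.

Lemma connect_map_rel_r (al r : T -> T) x : connect (map_rel al r) x (r x).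
Proof. by apply: connect1; rewrite /map_rel eqxx ?orbT. Qed.

(* Along the face of [a], [X y] is joined to [y] in the new map unless
   [r' (al y)] is [a] or [b]; the first would put [b] on the face, and the face
   can only close up at [a] through the second. *)
Lemma connect_map_mul_tperm al r a b :
  b \notin porbit (al * r)%g a -> connect (map_rel al (r * tperm a b)%g) a b.
Proof.
set X := (al * r)%g; set r' := (r * tperm a b)%g; set e := map_rel al r' => bX.
have Xr y : X y = tperm a b (r' (al y)) by rewrite !permM tpermK.
apply/contraT => nab.
have orbit_conn k : connect e a ((X ^+ k)%g a).
  elim: k => [|k IH]; first by rewrite expg0 perm1 connect0.
  rewrite expgSr permM Xr; set y := (X ^+ k)%g a in IH *.
  have ay' := connect_trans IH (connect_map_rel_step al r' y).
  case: tpermP => [ya | _ | _ _] //.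
  have Xy : X y = b by rewrite Xr ya tpermL.
  by rewrite -Xy -permM -expgSr mem_porbit in bX.
set y := (X ^+ #[X].-1)%g a.
have Xy : X y = a by rewrite -permM -expgSr prednK ?order_gt0 // expg_order perm1.
have r'y : r' (al y) = b by rewrite -(tpermK a b (r' (al y))) -Xr Xy tpermL.
by rewrite -r'y (connect_trans (orbit_conn _) (connect_map_rel_step al r' y)) in nab.
Qed.

Lemma connect_tperm (e : rel T) a b z :
  connect_sym e -> connect e a b -> connect e z (tperm a b z).
Proof.
by move=> sym_e ab; case: tpermP => [->|->|_ _]; rewrite ?connect0 // sym_e.
Qed.

Lemma map_connect_mul_tperm_sub (e : rel T) al r a b :
  connect_sym e -> connect e a b ->
  subrel (map_rel al (r * tperm a b)%g) (connect e) ->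
  subrel (connect (map_rel al r)) (connect e).
Proof.
move=> sym_e ab sub; apply: connect_sub => x y.
have r_tperm z : r z = tperm a b ((r * tperm a b)%g z) by rewrite permM tpermK.
have sub_r z : connect e z (r z).
  rewrite r_tperm; apply: connect_trans (connect_tperm _ sym_e ab).
  by apply: sub; rewrite /map_rel eqxx ?orbT.
case/or4P=> /eqP->; rewrite ?[connect e (_ y) y]sym_e //.
  by apply: sub; rewrite /map_rel eqxx.
by apply: sub; rewrite /map_rel eqxx.
Qed.

Lemma map_comps_mul_tperm al r a b :
  map_comps al (r * tperm a b)%g <= (map_comps al r).+1.
Proof.
set r' := (r * tperm a b)%g.
have symU : connect_sym (relU (map_rel al r') (pair_rel a b)).
  by apply: relU_sym; [apply: map_connect_sym | apply/sym_connect_sym/pair_rel_sym].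
apply: leq_trans (n_comp_relU_pair a b (map_connect_sym al r')) _.
rewrite ltnS; apply: n_comp_sub => //; first exact: map_connect_sym.
apply: (map_connect_mul_tperm_sub (a := a) (b := b) symU).
  by apply: connect1; rewrite /= /pair_rel !eqxx orbT.
by move=> x y xy; apply: connect1; rewrite /= xy.
Qed.

Lemma map_comps_mul_tperm_merge al r a b : a \notin porbit (al * r)%g b ->
  map_comps al (r * tperm a b)%g <= map_comps al r.
Proof.
move=> ab; apply: n_comp_sub; [exact: map_connect_sym | exact: map_connect_sym |].
apply: (map_connect_mul_tperm_sub (map_connect_sym _ _)).
  by apply: connect_map_mul_tperm; rewrite porbit_sym.
by move=> x y; apply: connect1.
Qed.

(* As 2 K - F = 2 g + V - E, this says that splitting a vertex of the map by a
   transposition cannot increase its genus. *)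
Lemma map_comps_faces_mul_tperm al r a b : a != b ->
  (map_comps al (r * tperm a b)%g).*2 + map_faces al r <=
  (map_comps al r).*2 + map_faces al (r * tperm a b)%g + 1.
Proof.
move=> ab; have := porbits_mul_tpermr (al * r)%g a b.
rewrite ab -mulgA -/(map_faces al r) -/(map_faces al (r * tperm a b)%g).
case: (boolP (a \in porbit (al * r)%g b)) => [ab_face | ab_faces] /=.
  by have := map_comps_mul_tperm al r a b; lia.
by have := map_comps_mul_tperm_merge ab_faces; lia.
Qed.

End Maps.

(* When the rotation is also a fixed-point-free involution, every component
   is a cycle alternating between [al] and [s], traversed by two faces. *)
Section Involutions.
Variable T : finType.
Variables al s : {perm T}.
Hypotheses (alK : involutive al) (sK : involutive s).
Hypotheses (al_fp : forall x, al x != x) (s_fp : forall x, s x != x).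
Local Notation rho := (al * s)%g.
Local Notation circ := (map_rel al s).

Lemma rhoE z : rho z = s (al z). Proof. by rewrite permM. Qed.

Lemma rho_s_rho z : rho (s (rho z)) = s z.
Proof. by rewrite !rhoE sK alK. Qed.

Lemma fconnect_s x y : fconnect rho x y -> fconnect rho (s x) (s y).
Proof.
move/iter_findex <-; elim: (findex _ _ _) => [|k IH] /=; first exact: connect0.
apply: (connect_trans IH); rewrite fconnect_sym_perm.
by apply: connect1; rewrite /= rho_s_rho.
Qed.

Lemma s_neq_iter_rho k x : s x != iter k rho x.
Proof.
suff : forall n y, (s y != iter n rho y) && (s y != iter n.+1 rho y).
  by move/(_ k x)/andP=> [].
elim=> [|n IH] y.
  by rewrite s_fp /= rhoE; apply: contra (al_fp y) => /eqP/perm_inj <-.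
rewrite (andP (IH y)).2 /=; apply/eqP => sy.
have : s (rho y) = iter n rho (rho y).
  by apply: (@perm_inj _ rho); rewrite rho_s_rho sy -iterSr.
by move/eqP; rewrite (negbTE (andP (IH (rho y))).1).
Qed.

Lemma not_fconnect_rho_s x : ~~ fconnect rho x (s x).
Proof. by apply/negP => /iter_findex/esym/eqP; rewrite (negbTE (s_neq_iter_rho _ _)). Qed.

Lemma connect_circ_fconnect x y : fconnect rho x y -> connect circ x y.
Proof.
apply: connect_sub => {}x _ /eqP <-; rewrite rhoE.
apply: (connect_trans (y := al x)); apply: connect1; by rewrite /map_rel eqxx ?orbT.
Qed.

Lemma fconnect_connect_circ x y :
  connect circ x y -> fconnect rho x y || fconnect rho (s x) y.
Proof.
pose C := [pred w | fconnect rho x w || fconnect rho (s x) w].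
have C_s w : C w -> C (s w).
  case/orP=> xw; apply/orP; [right | left]; first exact: fconnect_s.
  by rewrite -[x]sK; apply: fconnect_s.
have C_al w : C w -> C (al w).
  move=> Cw; have -> : al w = s (rho w) by rewrite rhoE sK.
  apply: C_s; case/orP: Cw => xw; apply/orP; [left | right];
    by apply: connect_trans xw (fconnect1 _ _).
have closedC : closed circ C.
  apply: (intro_closed (map_connect_sym al s)) => u v.
  case/or4P=> /eqP->; rewrite ?alK ?sK //; try exact: C_al; try exact: C_s.
  - by move/C_al; rewrite alK.
  - by move/C_s; rewrite sK.
by move/(closed_connect closedC); rewrite !inE connect0 /= => <-.
Qed.

Lemma map_faces_involutions : map_faces al s = (map_comps al s).*2.
Proof.
have sym_circ : connect_sym circ := map_connect_sym al s.
have sym_rho : connect_sym (frel rho) := fconnect_sym_perm rho.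
rewrite /map_faces card_porbits /map_comps n_compT.
pose h (rb : T * bool) := froot rho (if rb.2 then rb.1 else s rb.1).
have circ_h r b : connect circ r (h (r, b)).
  case: b; rewrite /h /=; first exact/connect_circ_fconnect/connect_root.
  exact/(connect_trans (connect_map_rel_r al s r))/connect_circ_fconnect/connect_root.
transitivity #|[seq h rb | rb in [predX roots circ & predT]]|.
  apply: eq_card => x; apply/idP/mapP => [x_root | [rb _ ->]]; last exact: roots_root.
  have /fconnect_connect_circ : connect circ (fingraph.root circ x) x.
    by rewrite sym_circ connect_root.
  set rx := fingraph.root circ x.
  case/orP=> rho_x; [exists (rx, true) | exists (rx, false)];
    rewrite ?mem_enum ?inE /= ?roots_root // -{1}(eqP x_root) /h /=;
    by apply/(fingraph.rootP sym_rho); rewrite sym_rho.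
rewrite card_in_image ?cardX ?card_bool ?muln2 //.
move=> [r b] [r' b']; rewrite !inE /= !andbT => /eqP rr /eqP rr' hh.
have r'r : r' = r.
  rewrite -rr -rr'; apply/(fingraph.rootP sym_circ).
  by apply: connect_trans (circ_h r' b') _; rewrite -hh sym_circ circ_h.
subst r'; congr (_, _); apply/eqP/contraT => bb'.
have : fconnect rho r (s r).
  move: hh; rewrite /h; case: b b' bb' => [] [] //= _ /(fingraph.rootP sym_rho) //.
  by rewrite sym_rho.
by rewrite (negbTE (not_fconnect_rho_s r)).
Qed.

End Involutions.

Section Diagram.
Variable D : diagram.
Hypothesis HD : is_diagram D.
Local Notation n := (ncr D).
Local Notation dT := (dart D).

Lemma edgeK : involutive (edge D). Proof. by case: HD. Qed.

Lemma edge_fp (d : dT) : edge D d != d.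
Proof. by apply/eqP => ed; case: HD => _ /(_ d); rewrite ed; case: (incoming d). Qed.

Definition edgep : {perm dT} := perm (can_inj edgeK).
Lemma edgepE d : edgep d = edge D d. Proof. by rewrite permE. Qed.

Lemma ord4P (P : 'I_4 -> Prop) :
  P (inord 0) -> P (inord 1) -> P (inord 2) -> P (inord 3) -> forall k, P k.
Proof.
move=> P0 P1 P2 P3 k; rewrite -(inord_val k).
by case: k => [[|[|[|[|k]]]] lt_k4].
Qed.

Lemma rot_inj : injective (@Defs.rot D).
Proof.
have rotK : cancel (@Defs.rot D) (fun d => (d.1, inord ((d.2).+3 %% 4))).
  move=> [c k]; rewrite /Defs.rot /=; congr (_, _); move: k; apply: ord4P;
  by apply/val_inj; rewrite /= !inordK.
exact: can_inj rotK.
Qed.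

Definition rotp : {perm dT} := perm rot_inj.
Lemma rotpE d : rotp d = Defs.rot d. Proof. by rewrite permE. Qed.

Lemma smoothK (u : state D) : involutive (smooth u).
Proof.
move=> [c k]; rewrite /smooth /=; case: (u c); congr (_, _); move: k; apply: ord4P;
by apply/val_inj; rewrite /= !inordK.
Qed.

Lemma smooth_fp (u : state D) d : smooth u d != d.
Proof.
case: d => c k; rewrite /smooth /=; case: (u c); apply/negP => /eqP [];
by move: k; apply: ord4P; move/(congr1 val); rewrite /= !inordK.
Qed.

Definition smoothp (u : state D) : {perm dT} := perm (can_inj (smoothK u)).
Lemma smoothpE u d : smoothp u d = smooth u d. Proof. by rewrite permE. Qed.

Lemma map_rel_edge (r : {perm dT}) x y :
  map_rel edgep r x y = [|| y == edge D x, y == r x | x == r y].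
Proof.
rewrite /map_rel !edgepE.
have -> : (x == edge D y) = (y == edge D x) by apply/eqP/eqP => [->|->]; rewrite edgeK.
by rewrite orbA orbb.
Qed.

Lemma euler_rotp : map_faces edgep rotp = n + (map_comps edgep rotp).*2.
Proof.
have -> : map_comps edgep rotp = n_comp (@graph_rel D) predT.
  apply: eq_n_comp => x y; apply: eq_connect => a b.
  by rewrite map_rel_edge !rotpE.
rewrite /map_faces card_porbits -mul2n; case: HD => _ _ <-.
rewrite n_compT; apply: eq_card; apply: eq_roots => a b.
by rewrite /= permM edgepE rotpE.
Qed.

Definition ncirc (u : state D) := #|roots (circ_rel u)|.

Lemma connect_circ_rel (u : state D) :
  connect (circ_rel u) =2 connect (map_rel edgep (smoothp u)).
Proof.
apply: eq_connect => x y; rewrite map_rel_edge !smoothpE /circ_rel.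
have -> : (x == smooth u y) = (y == smooth u x).
  by apply/eqP/eqP => [->|->]; rewrite smoothK.
by rewrite orbb.
Qed.

Lemma edgepK : involutive edgep. Proof. by move=> x; rewrite !edgepE edgeK. Qed.
Lemma smoothpK u : involutive (smoothp u).
Proof. by move=> x; rewrite !smoothpE smoothK. Qed.
Lemma edgep_fp x : edgep x != x. Proof. by rewrite edgepE edge_fp. Qed.
Lemma smoothp_fp u x : smoothp u x != x. Proof. by rewrite smoothpE smooth_fp. Qed.

Lemma ncircE u : ncirc u = map_comps edgep (smoothp u).
Proof. by rewrite /ncirc -n_compT; apply: eq_n_comp; apply: connect_circ_rel. Qed.

Lemma map_faces_smooth u : map_faces edgep (smoothp u) = (ncirc u).*2.
Proof.
by rewrite ncircE (map_faces_involutions edgepK (smoothpK u) edgep_fp (smoothp_fp u)).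
Qed.

Definition dart_at (j : 'I_n) (k : nat) : dT := (j, inord k).

Definition smooth_swap (w : state D) (j : 'I_n) : {perm dT} :=
  if w j then tperm (dart_at j 1) (dart_at j 3) else tperm (dart_at j 0) (dart_at j 2).

Lemma dart_at_neq j k l : k < 4 -> l < 4 -> k != l -> dart_at j k != dart_at j l.
Proof. by move=> k4 l4 kl; rewrite /dart_at xpair_eqE eqxx /= -val_eqE /= !inordK. Qed.

Lemma smooth_swap_rot (w : state D) d : smooth w d = smooth_swap w d.1 (Defs.rot d).
Proof.
case: d => j k; rewrite /smooth_swap /dart_at /Defs.rot /smooth /=.
case: (w j); move: k; apply: ord4P;
  rewrite permE /= !xpair_eqE eqxx /= -!val_eqE /= !inordK //=;
by congr (_, _); apply/val_inj; rewrite /= !inordK.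
Qed.

Lemma smooth_swap_id (w : state D) j d : d.1 != j -> smooth_swap w j d = d.
Proof.
case: d => c k /= cj; rewrite /smooth_swap.
by case: (w j); rewrite permE /= !xpair_eqE (negbTE cj).
Qed.

(* D(w) with only the crossings in [S] smoothed, the others being kept as
   4-valent vertices. *)
Definition smooth_on (w : state D) (S : {set 'I_n}) (d : dT) : dT :=
  if d.1 \in S then smooth w d else Defs.rot d.

Lemma smooth_on_inj (w : state D) S : injective (smooth_on w S).
Proof.
have fst_smooth_on d : (smooth_on w S d).1 = d.1 by rewrite /smooth_on; case: ifP.
move=> d d' dd'; have fst_dd' : d.1 = d'.1 by rewrite -fst_smooth_on dd' fst_smooth_on.
move: dd'; rewrite /smooth_on fst_dd'; case: ifP => _; first exact: (can_inj (smoothK w)).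
exact: rot_inj.
Qed.

Definition smooth_onp (w : state D) S : {perm dT} := perm (@smooth_on_inj w S).

Lemma smooth_onp0 (w : state D) : smooth_onp w set0 = rotp.
Proof. by apply/permP => d; rewrite !permE /smooth_on inE. Qed.

Lemma smooth_onpT (w : state D) : smooth_onp w setT = smoothp w.
Proof. by apply/permP => d; rewrite !permE /smooth_on inE. Qed.

Lemma eq_smooth_onp (w w' : state D) (S : {set 'I_n}) :
  {in S, w =1 w'} -> smooth_onp w S = smooth_onp w' S.
Proof.
move=> ww'; apply/permP => -[c k]; rewrite !permE /smooth_on /=.
by case: ifP => // cS; rewrite /smooth /= ww'.
Qed.

Lemma smooth_onp_setU1 (w : state D) (S : {set 'I_n}) j : j \notin S ->
  smooth_onp w (j |: S) = (smooth_onp w S * smooth_swap w j)%g.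
Proof.
move=> jS; apply/permP => d; rewrite permM !permE /smooth_on in_setU1.
case: (eqVneq d.1 j) => [dj | dj] /=.
  by rewrite dj (negbTE jS) smooth_swap_rot dj.
by case: ifP => _; rewrite smooth_swap_id //; case: d dj.
Qed.

(* The genus of the planar diagram is 0 and smoothing a crossing cannot
   increase it. *)
Lemma smooth_onp_euler (w : state D) (S : {set 'I_n}) :
  (map_comps edgep (smooth_onp w S)).*2 + n <= map_faces edgep (smooth_onp w S) + #|S|.
Proof.
elim: {S}_.+1 {-2}S (ltnSn #|S|) => // m IH S.
case: (set_0Vmem S) => [-> _ | [j jS]]; first by rewrite smooth_onp0 euler_rotp cards0; lia.
rewrite -(setD1K jS) cardsU1 !inE eqxx /= ltnS => le_m.
rewrite smooth_onp_setU1 ?inE ?eqxx //.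
have add_step a a' f f' k :
  a' + f <= a + f' + 1 -> a + n <= f + k -> a' + n <= f' + (1 + k).
  by lia.
apply: add_step (IH _ le_m); rewrite /smooth_swap; case: (w j).
- exact: map_comps_faces_mul_tperm (@dart_at_neq j 1 3 isT isT isT).
- exact: map_comps_faces_mul_tperm (@dart_at_neq j 0 2 isT isT isT).
Qed.

Section Surgery.
Variables (w w' : state D) (i : 'I_n).
Hypotheses (wi : w i) (w'i : ~~ w' i) (w'w : {in [set~ i], w' =1 w}).
Local Notation s := (smoothp w).
Local Notation rho := (edgep * smoothp w)%g.
Local Notation circ := (map_rel edgep (smoothp w)).
Local Notation r := (smooth_onp w [set~ i]).
Local Notation X := (edgep * smooth_onp w [set~ i])%g.
Local Notation d := (dart_at i).

Lemma smoothp_split (v : state D) : {in [set~ i], v =1 w} ->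
  smoothp v = (r * smooth_swap v i)%g.
Proof.
move=> vw; rewrite -smooth_onpT -(setUCr [set i]) smooth_onp_setU1.
  by rewrite (eq_smooth_onp vw).
by rewrite !inE eqxx.
Qed.

Lemma unsmoothE : X = (rho * tperm (d 1) (d 3))%g.
Proof.
by rewrite (smoothp_split (fun _ _ => erefl)) /smooth_swap wi -!mulgA tperm2 mulg1.
Qed.

Lemma smoothp_w'E : (edgep * smoothp w')%g = (X * tperm (d 0) (d 2))%g.
Proof. by rewrite (smoothp_split w'w) /smooth_swap (negbTE w'i) mulgA. Qed.

Lemma s_dart_at k : k < 4 -> s (d k) = d (3 - k).
Proof.
move=> k4; rewrite smoothpE /smooth /= wi; congr (_, _); apply/val_inj.
by rewrite /= !inordK //; lia.
Qed.

Lemma faces_unsmooth :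
  map_faces edgep r + (d 1 \notin porbit rho (d 3)).*2 = (ncirc w).*2 + 1.
Proof.
rewrite -map_faces_smooth /map_faces unsmoothE.
by rewrite porbits_mul_tpermr (@dart_at_neq i 1 3 isT isT isT).
Qed.

Lemma faces_surgery :
  (ncirc w').*2 + (d 0 \notin porbit X (d 2)).*2 = map_faces edgep r + 1.
Proof.
rewrite -map_faces_smooth /map_faces smoothp_w'E.
by rewrite porbits_mul_tpermr (@dart_at_neq i 0 2 isT isT isT).
Qed.

Lemma comps_faces_unsmooth : (map_comps edgep r).*2 < map_faces edgep r.
Proof.
have n_gt0 : 0 < n by apply: leq_ltn_trans (ltn_ord i).
by have := smooth_onp_euler w [set~ i]; rewrite cardsC1 card_ord; lia.
Qed.

Lemma not_fconnect_s x : ~~ fconnect rho x (s x).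
Proof. exact: not_fconnect_rho_s edgepK (smoothpK w) edgep_fp (smoothp_fp w) x. Qed.

Lemma ncirc_le_comps_unsmooth :
  connect circ (d 0) (d 1) -> ncirc w <= map_comps edgep r.
Proof.
move=> c01; rewrite ncircE; apply: n_comp_sub; try exact: map_connect_sym.
have circ_d k : k < 4 -> connect circ (d 0) (d k).
  case: k => [|[|[|[|k]]]] // _.
  - apply: connect_trans c01 _; rewrite -[d 2]/(d (3 - 1)) -s_dart_at //.
    exact: connect_map_rel_r.
  - by rewrite -[d 3]/(d (3 - 0)) -s_dart_at // connect_map_rel_r.
have circ_r z : connect circ z (r z).
  rewrite permE /smooth_on !inE; case: (eqVneq z.1 i) => [zi | zi] /=.
    case: z zi => _ k /= ->; rewrite /Defs.rot /=.
    have -> : (i, k) = d k by rewrite /dart_at inord_val.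
    by apply: connect_trans (circ_d _ (ltn_mod _ _)); rewrite map_connect_sym circ_d.
  by rewrite -smoothpE connect_map_rel_r.
apply: connect_sub => x y /or4P[]/eqP->.
- by apply: connect1; rewrite /map_rel eqxx.
- by apply: connect1; rewrite /map_rel eqxx ?orbT.
- exact: circ_r.
- by rewrite map_connect_sym circ_r.
Qed.

(* The third possible effect of a surgery, leaving the number of circles
   unchanged, happens when it turns an annulus into a Moebius band; the
   diagram with crossing i restored would then not be planar. *)
Lemma no_twisted_surgery : connect circ (d 0) (d 1) -> ~~ fconnect rho (d 0) (d 1).
Proof.
move=> c01; apply/negP => f01.
have d13 : d 1 \notin porbit rho (d 3).
  rewrite in_porbit; apply: contraNN (not_fconnect_s (d 0)) => f31.
  by rewrite s_dart_at // (connect_trans f01) // fconnect_sym_perm.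
have := faces_unsmooth; rewrite d13 /=.
have := comps_faces_unsmooth; have := ncirc_le_comps_unsmooth c01; lia.
Qed.

Lemma ncirc_surgery : ncirc w' + (merging w i).*2 = (ncirc w).+1.
Proof.
have s0 : s (d 0) = d 3 by rewrite s_dart_at.
have s1 : s (d 1) = d 2 by rewrite s_dart_at.
have s3 : s (d 3) = d 0 by rewrite s_dart_at.
have d3_0 : d 3 \notin porbit rho (d 0) by rewrite in_porbit -s0 not_fconnect_s.
have := faces_unsmooth; have := faces_surgery.
rewrite /merging connect_circ_rel -[(i, inord 0)]/(d 0) -[(i, inord 1)]/(d 1).
case: (boolP (connect circ (d 0) (d 1))) => c01 /=.
  have f31 : fconnect rho (d 3) (d 1).
    by move: (fconnect_connect_circ edgepK (smoothpK w) c01);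
      rewrite (negbTE (no_twisted_surgery c01)) s0.
  have d1_0 : d 1 \notin porbit rho (d 0).
    rewrite in_porbit; apply: contraNN d3_0 => f01.
    by rewrite in_porbit (connect_trans f01) // fconnect_sym_perm.
  have d02 : d 0 \in porbit X (d 2).
    rewrite porbit_sym unsmoothE (porbit_mul_tperm_notin d1_0 d3_0) in_porbit -s3 -s1.
    exact: fconnect_s edgepK (smoothpK w) _ _ f31.
  by rewrite d02 in_porbit f31 /=; lia.
have d13 : d 1 \notin porbit rho (d 3).
  rewrite in_porbit; apply: contraNN c01 => /connect_circ_fconnect c31.
  by apply: connect_trans (connect_map_rel_r _ _ (d 0)) _; rewrite s0.
have d1_0 : d 1 \notin porbit rho (d 0).
  by rewrite in_porbit; apply: contraNN c01 => /connect_circ_fconnect.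
have d02 : d 0 \notin porbit X (d 2).
  rewrite porbit_sym unsmoothE (porbit_mul_tperm_notin d1_0 d3_0) in_porbit.
  apply: contraNN c01 => /connect_circ_fconnect c02.
  by rewrite (connect_trans c02) // -s1 map_connect_sym connect_map_rel_r.
by rewrite d13 d02 /=; lia.
Qed.

End Surgery.

Lemma chain_state0 (u : state D) : chain_state u 0 = ones D.
Proof. by apply/ffunP => j; rewrite !ffunE. Qed.

Lemma chain_stateT (u : state D) : chain_state u n = u.
Proof. by apply/ffunP => j; rewrite !ffunE ltn_ord. Qed.

Lemma weight_ones : weight (ones D) = n.
Proof.
rewrite /weight (_ : [set j | ones D j] = setT) ?cardsT ?card_ord //.
by apply/setP => j; rewrite !inE ffunE.
Qed.

Lemma chain_state_step (u : state D) (k : 'I_n) :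
  weight (chain_state u k.+1) + ncirc (chain_state u k.+1)
    + ((~~ u k) && merging (chain_state u k) k).*2
  = weight (chain_state u k) + ncirc (chain_state u k).
Proof.
set w := chain_state u k; set w' := chain_state u k.+1.
have w'w : {in [set~ k], w' =1 w}.
  by move=> j; rewrite !inE !ffunE ltnS leq_eqVlt -val_eqE => /negbTE->.
have w'k : w' k = u k by rewrite ffunE ltnSn.
have wk : w k by rewrite ffunE ltnn.
case: (boolP (u k)) => uk /=.
  suff -> : w' = w by rewrite addn0.
  by apply/ffunP => j; case: (eqVneq j k) => [-> | jk]; rewrite ?w'k ?wk ?uk ?w'w // !inE.
have weight_w : weight w = (weight w').+1.
  rewrite /weight (_ : [set j | w j] = k |: [set j | w' j]).
    by rewrite cardsU1 inE w'k (negbTE uk).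
  apply/setP => j; rewrite !inE; case: (eqVneq j k) => [-> | jk] /=; first by rewrite wk.
  by rewrite w'w // !inE.
have w'k_false : ~~ w' k by rewrite w'k.
by have := ncirc_surgery wk w'k_false w'w; lia.
Qed.

Lemma weight_ncirc_Phi (u : state D) : weight u + ncirc u + (Phi u).*2 = n + ncirc (ones D).
Proof.
suff partial m : m <= n -> weight (chain_state u m) + ncirc (chain_state u m)
    + (\sum_(k < n | k < m) ((~~ u k) && merging (chain_state u k) k)).*2
    = n + ncirc (ones D).
  rewrite -(partial n (leqnn n)) chain_stateT /Phi; congr (_ + _.*2).
  by apply: eq_bigl => k; rewrite ltn_ord.
elim: m => [_ | m IH lt_mn].
  by rewrite chain_state0 weight_ones big_pred0 ?addn0 // => k; rewrite ltn0.
pose t (k : 'I_n) := (~~ u k) && merging (chain_state u k) k.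
have -> : \sum_(k < n | k < m.+1) t k = t (Ordinal lt_mn) + \sum_(k < n | k < m) t k.
  rewrite (bigD1 (Ordinal lt_mn)) //=; congr (_ + _); apply: eq_bigl => k.
  by rewrite ltnS leq_eqVlt -val_eqE /=; case: ltngtP.
by rewrite doubleD addnA (chain_state_step u (Ordinal lt_mn)) IH // ltnW.
Qed.

Lemma card_Z (u : state D) : #|Z u| = ncirc u + nfree D.
Proof. by rewrite card_sum card_sig card_ord. Qed.

Lemma Zplus_Zminus (u : state D) (x : enh u) : Zplus x + Zminus x = #|Z u|.
Proof.
rewrite /Zplus /Zminus -(cardsC [set c | x c]); congr (_ + _).
by apply: eq_card => c; rewrite !inE.
Qed.

Lemma Zminus_xplus (u : state D) : Zminus (xplus u) = 0.
Proof.
rewrite /Zminus (_ : [set c | _] = set0) ?cards0 //.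
by apply/setP => c; rewrite !inE ffunE.
Qed.

Lemma Zminus_eq0 (u : state D) (x : enh u) : Zminus x = 0 -> x = xplus u.
Proof.
move/eqP; rewrite cards_eq0 => /eqP/setP x_plus.
by apply/ffunP => c; have := x_plus c; rewrite !inE ffunE; case: (x c).
Qed.

Lemma Zminus_eq1 (u : state D) (x : enh u) : Zminus x = 1 -> exists z, x = xzplus z.
Proof.
move/eqP/cards1P=> [z /setP x_minus]; exists z; apply/ffunP => c.
have := x_minus c; rewrite !inE ffunE.
by case: (x c) => /= [/esym/negbT-> | /esym/eqP->]; rewrite ?eqxx.
Qed.

Lemma qdegE (u : state D) (x : enh u) :
  qdeg x = (qdeg (xplus (ones D)) - 2 * (Phi u + Zminus x)%:Z)%R.
Proof.
have := Zplus_Zminus (xplus (ones D)); have := Zplus_Zminus x.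
rewrite /qdeg Zminus_xplus !card_Z weight_ones.
have := weight_ncirc_Phi u; lia.
Qed.

Lemma jmaxE : jmax D = qdeg (xplus (ones D)).
Proof.
set q := qdeg (xplus (ones D)).
have qdeg_le (u : state D) (x : enh u) : (qdeg x <= q)%R by rewrite qdegE; lia.
rewrite /jmax -/q; apply/eqP; rewrite eq_le; apply/andP; split.
- elim/big_rec: _ => // u v _ le_vq; rewrite ge_max le_vq andbT.
  by elim/big_rec: _ => // x y _ le_yq; rewrite ge_max le_yq andbT.
- by elim/big_rec: _ => // u v _ le_qv; rewrite le_max le_qv orbT.
Qed.

End Diagram.

Theorem corollary4p5 (D : diagram) (HD : is_diagram D)
    (u : state D) (x : enh u) :
  qdeg x = (jmax D - 2)%R ->
  [/\ (Phi u <= 1)%N,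
      Phi u = 0%N -> exists z : Z u, x = xzplus z &
      Phi u = 1%N -> x = xplus u].
Proof.
rewrite (jmaxE HD) (qdegE HD x) => q_eq.
have Phi_Zminus : (Phi u + Zminus x = 1)%N by lia.
split=> [| Phi0 | Phi1]; first lia.
- by apply: Zminus_eq1; lia.
- by apply: Zminus_eq0; lia.
Qed.
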